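(* Consider the static single-object erasure-coded Byzantine read/write protocol described in the context over a set $C$ of flexnodes, at most $b<\frac{|C|-k}{3}$ of which are Byzantine, and suppose at most $\delta$ write operations are concurrent with any read. In any execution, if $\omega$ is a complete write and $\rho$ a complete read such that $\omega$ completes before $\rho$ is invoked, and $\omega$ executes put-data$(\langle t_\omega,v_\omega\rangle)$ on $C$, then $\rho$ returns a value associated with a tag $t_\rho\ge t_\omega$.
   Context: Model. $C$ is a fixed finite set of processes (''flexnodes'') over asynchronous reliable channels. Up to $b$ flexnodes may be Byzantine. Processes invoking reads/writes follow the protocol but may crash. Signatures are unforgeable. An $[n,k]$ RLNC code with $n=|C|$: $\mathrm{Encode}(v)$ produces $|C|$ coded elements, any $k$ of which (from the same encoding) recover $v$. Tags are pairs $(z,w)$, $z\in\mathbb{N}$, $w$ a writer identifier, ordered lexicographically. A parameter $\delta\ge1$ is fixed. A quorum is any subset of $C$ of size $\lceil (2|C|+k)/3\rceil$. State. Each flexnode keeps a set $List$ of signed triples $(\langle t,e\rangle,\sigma)$, initially holding the initial pair with tag $t_0$. Primitives (by flexnode $p$): get-tag: query all, each replies with its signed max-tag entry, wait for replies from a quorum, return the maximum verified tag. put-data$(\langle t,v\rangle)$: encode $v$ into $e_1,\dots,e_{|C|}$, send $\langle t,e_j\rangle$ signed by $p$ to the $j$-th flexnode; a receiver adds it to $List$ if the signature verifies and no entry with tag $t$ exists, then if $|List|>\delta+1$ removes the entries with minimum tag, and acknowledges; $p$ waits for a quorum of acknowledgements. get-data: query all, each replies with its $List$, wait for a quorum, keep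 verified pairs, take the maximum tag appearing in at least $k$ received lists, decode and return it with its tag; if none exists the primitive does not complete. Operations: read = get-data returning $\langle t,v\rangle$, then put-data$(\langle t,v\rangle)$, then return $\langle t,v\rangle$; write$(v)$ by $w$ = get-tag returning $t$, then put-data$(\langle (t.z+1,w),v\rangle)$. *)

From mathcomp Require Import all_boot.

Set Implicit Arguments.
Unset Strict Implicit.
Unset Printing Implicit Defensive.

(* Tags: pairs (z, w), z a natural number, w a writer identifier (nat),
   ordered lexicographically.                                          *)
Definition Tag := (nat * nat)%type.

Definition tle (a b : Tag) : bool :=
  (a.1 < b.1) || ((a.1 == b.1) && (a.2 <= b.2)).

Definition tmax (a b : Tag) : Tag := if tle a b then b else a.

(* the initial tag t0 (strictly below every tag produced by a write) *)
Definition t0 : Tag := (0, 0).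

(* Clients (processes invoking operations) are identified by nat;
   the identifier of a writer is its client identifier.
   ERespW records (as an annotation) the tag used by the write's put-data. *)
Inductive Event (V : Type) :=
| EInvW  (c : nat) (v : V)
| ERespW (c : nat) (t : Tag)
| EInvR  (c : nat)
| ERespR (c : nat) (t : Tag) (v : V).

Arguments EInvR {V} c.
Arguments ERespW {V} c t.
Arguments EInvW {V} c v.
Arguments ERespR {V} c t v.

Definition ev_client V (e : Event V) : nat :=
  match e with EInvW c _ | ERespW c _ | EInvR c | ERespR c _ _ => c end.

Definition is_resp V (e : Event V) : bool :=
  match e with ERespW _ _ | ERespR _ _ _ => true | _ => false end.

Definition is_winv V (e : Event V) : bool :=
  if e is EInvW _ _ then true else false.

Definition is_rinv V (e : Event V) : bool :=
  if e is EInvR _ then true else false.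

Definition evt V (h : seq (Event V)) (i : nat) : Event V := nth (EInvR 0) h i.

Definition done_before V (h : seq (Event V)) (i x : nat) : bool :=
  has (fun j => is_resp (evt h j) && (ev_client (evt h j) == ev_client (evt h i)))
      (iota i.+1 (x - i.+1)).

Definition concurrent V (h : seq (Event V)) (i1 i2 : nat) : bool :=
  ~~ done_before h i1 i2 && ~~ done_before h i2 i1.

Definition write_concurrency_le V (delta : nat) (h : seq (Event V)) : Prop :=
  forall ir, ir < size h -> is_rinv (evt h ir) ->
    count (fun iw => is_winv (evt h iw) && concurrent h iw ir) (iota 0 (size h))
      <= delta.

Section Protocol.

Variable S : finType.          (* the set C of flexnodes *)
Variable B : {set S}.
Variable k : nat.              (* code dimension of the [n,k] code, n = #|S| *)
Variable delta : nat.
Variable V E : eqType.         (* values, coded elements *)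
Variable enc : V -> 'I_#|S| -> E.
Variable dec : seq E -> V.
Variable v0 : V.

(* quorum size ceil((2|C| + k)/3) *)
Definition qsize : nat := (2 * #|S| + k + 2) %/ 3.

(* the j-th flexnode is enum_rank s *)
Definition frag (v : V) (s : S) : E := enc v (enum_rank s).

(* signed triples (<t, e>, sigma); the signature is idealised as the
   identity of the signer (None = the signer of the initial pair).  A
   triple verifies iff it has actually been signed (unforgeability). *)
Definition SEntry := (Tag * E * option nat)%type.
Definition se_tag (x : SEntry) : Tag := x.1.1.
Definition se_elem (x : SEntry) : E := x.1.2.

Inductive SMsg :=
| QTag  (rid : nat)
| QData (rid : nat)
| Put   (rid : nat) (x : SEntry).

Inductive CMsg :=
| RTag  (rid : nat) (x : SEntry)
| RData (rid : nat) (L : seq SEntry)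
| Ack   (rid : nat).

Inductive NetMsg :=
| ToServer (c : nat) (s : S) (m : SMsg)
| ToClient (s : S) (c : nat) (m : CMsg).

(* local state of a client (one operation at a time) *)
Inductive CState :=
| Idle
| WTag (rid : nat) (v : V) (R : S -> option (option Tag))
       (* write, get-tag phase; R s = Some o : s replied, o its verified tag *)
| WPut (rid : nat) (t : Tag) (A : {set S})
       (* write, put-data phase; A = flexnodes that acknowledged *)
| RGet (rid : nat) (R : S -> option (seq SEntry))
       (* read, get-data phase; R s = Some L : s replied, L its verified pairs *)
| RPut (rid : nat) (t : Tag) (v : V) (A : {set S}).

Record State := mkState {
  lists  : S -> seq SEntry;   (* the List of every (correct) flexnode *)
  net    : seq NetMsg;
  cl     : nat -> CState;
  signed : seq SEntry;        (* all triples signed so far *)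
  hist   : seq (Event V);
  ctr    : nat                (* source of fresh request identifiers *)
}.

Definition maxentry (L : seq SEntry) : option SEntry :=
  foldr (fun x acc => match acc with
                      | None => Some x
                      | Some y => if tle (se_tag y) (se_tag x) then Some x else Some y
                      end) None L.

Definition gc (L : seq SEntry) : seq SEntry :=
  if delta.+1 < size L then
    [seq x <- L | ~~ all (fun y => tle (se_tag x) (se_tag y)) L]
  else L.

Definition server_step (sg : seq SEntry) (L : seq SEntry) (s : S) (c : nat)
    (m : SMsg) : seq SEntry * seq NetMsg :=
  match m with
  | QTag rid => (L, if maxentry L is Some x then [:: ToClient s c (RTag rid x)] else [::])
  | QData rid => (L, [:: ToClient s c (RData rid L)])
  | Put rid x =>
      let L' := if (x \in sg) && all (fun y => se_tag y != se_tag x) L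
                then gc (x :: L) else L in
      (L', [:: ToClient s c (Ack rid)])
  end.

Definition upd (T : Type) (f : S -> T) (s : S) (y : T) : S -> T :=
  fun s' => if s' == s then y else f s'.

Definition client_recv (sg : seq SEntry) (cs : CState) (s : S) (m : CMsg) : CState :=
  match cs, m with
  | WTag rid v R, RTag rid' x =>
      if (rid' == rid) && (R s == None) then
        WTag rid v (upd R s (Some (if x \in sg then Some (se_tag x) else None)))
      else cs
  | WPut rid t A, Ack rid' => if rid' == rid then WPut rid t (s |: A) else cs
  | RGet rid R, RData rid' L =>
      if (rid' == rid) && (R s == None) then
        RGet rid (upd R s (Some [seq x <- L | x \in sg]))
      else cs
  | RPut rid t v A, Ack rid' => if rid' == rid then RPut rid t v (s |: A) else cs
  | _, _ => cs
  end.

Definition nreplies (T : Type) (R : S -> option T) : nat := #|[set s | isSome (R s)]|.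

Definition maxtag (R : S -> option (option Tag)) : Tag :=
  foldr (fun s acc => if R s is Some (Some t) then tmax t acc else acc) t0 (enum S).

Definition nlists_with (R : S -> option (seq SEntry)) (t : Tag) : nat :=
  #|[set s | if R s is Some L then t \in [seq se_tag x | x <- L] else false]|.

Definition elems_with (R : S -> option (seq SEntry)) (t : Tag) : seq E :=
  [seq se_elem x | x <- flatten [seq odflt [::] (R s) | s <- enum S] & se_tag x == t].

Definition put_triples (c : nat) (t : Tag) (v : V) : seq SEntry :=
  [seq (t, frag v s, Some c) | s <- enum S].
Definition put_msgs (c rid : nat) (t : Tag) (v : V) : seq NetMsg :=
  [seq ToServer c s (Put rid (t, frag v s, Some c)) | s <- enum S].

Definition setcl (f : nat -> CState) (c : nat) (x : CState) : nat -> CState :=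
  fun c' => if c' == c then x else f c'.

Inductive step : State -> State -> Prop :=
| StInvW st c v :
    cl st c = Idle ->
    step st (mkState (lists st)
                     (net st ++ [seq ToServer c s (QTag (ctr st)) | s <- enum S])
                     (setcl (cl st) c (WTag (ctr st) v (fun _ => None)))
                     (signed st) (rcons (hist st) (EInvW c v)) (ctr st).+1)
| StInvR st c :
    cl st c = Idle ->
    step st (mkState (lists st)
                     (net st ++ [seq ToServer c s (QData (ctr st)) | s <- enum S])
                     (setcl (cl st) c (RGet (ctr st) (fun _ => None)))
                     (signed st) (rcons (hist st) (EInvR c)) (ctr st).+1)
| StDelS st n1 n2 c s m :
    net st = n1 ++ ToServer c s m :: n2 -> s \notin B ->
    step st (mkState (upd (lists st) s (server_step (signed st) (lists st s) s c m).1)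
                     (n1 ++ n2 ++ (server_step (signed st) (lists st s) s c m).2)
                     (cl st) (signed st) (hist st) (ctr st))
| StDelC st n1 n2 s c m :
    net st = n1 ++ ToClient s c m :: n2 ->
    step st (mkState (lists st) (n1 ++ n2)
                     (setcl (cl st) c (client_recv (signed st) (cl st c) s m))
                     (signed st) (hist st) (ctr st))
| StByz st s c m :
    s \in B ->
    step st (mkState (lists st) (net st)
                     (setcl (cl st) c (client_recv (signed st) (cl st c) s m))
                     (signed st) (hist st) (ctr st))
| StWTagDone st c rid v R :
    cl st c = WTag rid v R -> qsize <= nreplies R ->
    let t := ((maxtag R).1.+1, c) in
    step st (mkState (lists st) (net st ++ put_msgs c (ctr st) t v)
                     (setcl (cl st) c (WPut (ctr st) t set0))
                     (signed st ++ put_triples c t v) (hist st) (ctr st).+1)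
| StWPutDone st c rid t A :
    cl st c = WPut rid t A -> qsize <= #|A| ->
    step st (mkState (lists st) (net st) (setcl (cl st) c Idle)
                     (signed st) (rcons (hist st) (ERespW c t)) (ctr st))
| StRGetDone st c rid R t :
    cl st c = RGet rid R -> qsize <= nreplies R ->
    k <= nlists_with R t ->
    (forall t', k <= nlists_with R t' -> tle t' t) ->
    let v := dec (elems_with R t) in
    step st (mkState (lists st) (net st ++ put_msgs c (ctr st) t v)
                     (setcl (cl st) c (RPut (ctr st) t v set0))
                     (signed st ++ put_triples c t v) (hist st) (ctr st).+1)
| StRPutDone st c rid t v A :
    cl st c = RPut rid t v A -> qsize <= #|A| ->
    step st (mkState (lists st) (net st) (setcl (cl st) c Idle)
                     (signed st) (rcons (hist st) (ERespR c t v)) (ctr st)).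

Definition init_state : State :=
  mkState (fun s => [:: (t0, frag v0 s, None)]) [::] (fun _ => Idle)
          [seq (t0, frag v0 s, None) | s <- enum S] [::] 0.

Inductive reachable : State -> Prop :=
| ReachInit : reachable init_state
| ReachStep st st' : reachable st -> step st st' -> reachable st'.

End Protocol.

From mathcomp Require Import all_boot zify.

Set Implicit Arguments.
Unset Strict Implicit.
Unset Printing Implicit Defensive.

(* Let m be the largest tag of a write that completed before the read was
   invoked.  Since 3b < |C| - k, any two quorums share at least k correct
   flexnodes, so the read hears from k correct members of the quorum that
   acknowledged m.  Each of them still lists m, unless its List has since
   received more than delta distinct tags newer than m; but a signed tag newer
   than m belongs to a write that did not complete before the read started,
   i.e. to one of the at most delta writes concurrent with the read.  Hence m
   appears in k of the lists the read collects, and the tag it returns is at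
   least m.  Formally this is an invariant of all reachable states, with a
   ghost map recording the acknowledging quorum of every completed write. *)

(** * Tags and sequences *)

Section TagOrder.
Implicit Types a b c : Tag.

Lemma tle_refl a : tle a a.
Proof. case: a => a1 a2; rewrite /tle /=; lia. Qed.

Lemma tle_trans b a c : tle a b -> tle b c -> tle a c.
Proof. case: a b c => [a1 a2] [b1 b2] [c1 c2]; rewrite /tle /=; lia. Qed.

Lemma tle_total a b : tle a b || tle b a.
Proof. case: a b => [a1 a2] [b1 b2]; rewrite /tle /=; lia. Qed.

Lemma tle_anti a b : tle a b -> tle b a -> a = b.
Proof.
case: a b => [a1 a2] [b1 b2]; rewrite /tle /= => ab ba.
by have [-> ->] : a1 = b1 /\ a2 = b2 by lia.
Qed.

Lemma t0_tle a : tle t0 a.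
Proof. case: a => a1 a2; rewrite /tle /=; lia. Qed.

Lemma ntle_tle a b : ~~ tle a b -> tle b a.
Proof. by move: (tle_total a b) => /orP[->|]. Qed.

End TagOrder.

Lemma seq_min_rel (T : eqType) (r : rel T) (s : seq T) :
  total r -> transitive r -> s != [::] -> exists2 y, y \in s & all (r y) s.
Proof.
move=> r_total r_trans s_nil.
have perm_s : perm_eq (sort r s) s by rewrite perm_sort.
have := sort_sorted r_total s; case: (sort r s) perm_s => [|y s'] perm_s sorted_s.
  by move: s_nil; rewrite -size_eq0 -(perm_size perm_s).
exists y; first by rewrite -(perm_mem perm_s) mem_head.
rewrite -(perm_all _ perm_s) /= (order_path_min r_trans sorted_s) andbT.
by case/orP: (r_total y y).
Qed.

Lemma uniq_leq_size_rel (T I : eqType) (Q : I -> T -> Prop) (ts : seq T) (js : seq I) :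
  uniq ts -> (forall t, t \in ts -> exists2 i, i \in js & Q i t) ->
  (forall i t1 t2, Q i t1 -> Q i t2 -> t1 = t2) -> size ts <= size js.
Proof.
elim: ts js => [//|t ts IH] js /= /andP[t_ts ts_uniq] cover Q_fun.
have [i i_js Qit] := cover t (mem_head _ _).
have js_pos : 0 < size js by case: (js) i_js.
suff : size ts <= size (rem i js) by rewrite size_rem //; lia.
apply: IH => // t' t'_ts.
have [i' i'_js Qi't'] := cover t' (mem_behead (s := t :: ts) t'_ts).
exists i' => //; apply: rem_mem i'_js; apply: contraNneq t_ts => i'i.
by rewrite (Q_fun i t t') // -i'i.
Qed.

Lemma In_app_remove (T : Type) (y m : T) n n1 n2 o :
  n = n1 ++ m :: n2 -> List.In y (n1 ++ n2 ++ o) -> List.In y n \/ List.In y o.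
Proof.
move=> -> /List.in_app_iff[|/List.in_app_iff[]]; [left|left|right] => //;
  apply/List.in_app_iff; [left|right; right] => //.
Qed.

Notation tags L := [seq se_tag y | y <- L].

(** * Garbage-collected Lists *)

Section Storage.
Variables (S : finType) (delta : nat) (E : eqType).
Implicit Types (L : seq (SEntry E)) (x : SEntry E) (t : Tag).

(* The second disjunct is what survives garbage collection: [t] may have been
   dropped, but only in favour of more than [delta] distinct newer tags. *)
Definition covers L t : bool :=
  (t \in tags L) ||
  [&& delta < size L, uniq (tags L) & all (fun y => ~~ tle (se_tag y) t) L].

Definition list_wf (sg : seq (SEntry E)) L : Prop :=
  [/\ uniq (tags L), size L <= delta.+1 & {subset L <= sg}].

Definition tag_min L x : bool := all (fun y => tle (se_tag x) (se_tag y)) L.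

Lemma gcE L : gc delta L =
  if delta.+1 < size L then [seq x <- L | ~~ tag_min L x] else L.
Proof. by []. Qed.

Lemma count_tag_min L : L != [::] -> uniq (tags L) -> count (tag_min L) L = 1.
Proof.
move=> L_nil L_uniq.
have [m m_L m_min] := seq_min_rel (r := fun x y => tle (se_tag x) (se_tag y))
  (fun x y => tle_total _ _) (fun y x z => @tle_trans _ _ _) L_nil.
have min_tag y : y \in L -> tag_min L y -> se_tag y = se_tag m.
  by move=> y_L y_min; apply: tle_anti; [apply: (allP y_min)|apply: (allP m_min)].
apply/eqP; rewrite eqn_leq -has_count; apply/andP; split; last by apply/hasP; exists m.
apply: (@leq_trans (count (pred1 (se_tag m)) (tags L))); last first.
  by rewrite count_uniq_mem // leq_b1.
rewrite count_map -(@eq_in_count _ (fun y => tag_min L y && (se_tag y == se_tag m))).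
  by apply: sub_count => y /andP[].
by move=> y y_L; case: (boolP (tag_min L y)) => //= y_min; rewrite min_tag ?eqxx.
Qed.

Lemma mem_gc L : {subset gc delta L <= L}.
Proof. by rewrite gcE; case: ifP => _ y //; rewrite mem_filter => /andP[]. Qed.

Lemma uniq_gc L : uniq (tags L) -> uniq (tags (gc delta L)).
Proof.
by rewrite gcE; case: ifP => // _; apply: subseq_uniq; apply/map_subseq/filter_subseq.
Qed.

Lemma size_gc_full L : delta.+1 < size L -> uniq (tags L) ->
  size (gc delta L) = (size L).-1.
Proof.
move=> big L_uniq; rewrite gcE big size_filter.
have L_nil : L != [::] by case: (L) big.
by rewrite -(count_predC (tag_min L) L) count_tag_min.
Qed.

Lemma size_gc L : uniq (tags L) -> size L <= delta.+2 -> size (gc delta L) <= delta.+1.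
Proof.
move=> L_uniq L_small; case: (ltnP delta.+1 (size L)) => big.
  by rewrite size_gc_full //; lia.
by rewrite gcE ltnNge big.
Qed.

Lemma covers_gc L t : uniq (tags L) -> size L <= delta.+2 -> covers L t ->
  covers (gc delta L) t.
Proof.
move=> L_uniq L_small L_t; case: (ltnP delta.+1 (size L)) => big; last first.
  by rewrite gcE ltnNge big.
rewrite /covers uniq_gc // size_gc_full //; case: (boolP (t \in _)) => //= t_gc.
apply/andP; split; first by lia.
apply/allP => y; rewrite gcE big mem_filter => /andP[/allPn[z z_L yz] y_L].
case/orP: L_t => [/mapP[x x_L tx]|/and3P[_ _ /allP L_gt]]; last exact: L_gt.
subst t.
have x_min : tag_min L x.
  apply: contraNT t_gc => x_nmin; apply/mapP; exists x => //.
  by rewrite gcE big mem_filter x_nmin.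
by move: yz; apply: contraNN => yx; apply: tle_trans yx (allP x_min z z_L).
Qed.

Lemma covers_gc_cons x L t : uniq (tags (x :: L)) -> size L <= delta.+1 ->
  covers L t -> covers (gc delta (x :: L)) t.
Proof.
move=> xL_uniq L_small L_t.
have [xL_t|xL_nt] := boolP (covers (x :: L) t); first exact: covers_gc.
have t_L : t \notin tags L.
  by apply: contra xL_nt => t_L; rewrite /covers /= in_cons t_L orbT.
move: L_t; rewrite /covers (negbTE t_L) /= => /and3P[L_big L_uniq L_gt].
have xt : tle (se_tag x) t.
  apply: contraNT xL_nt => xt.
  by rewrite /covers xL_uniq /= xt L_gt ltnS (ltnW L_big) orbT.
suff -> : gc delta (x :: L) = L by rewrite /covers L_big L_uniq L_gt orbT.
have x_min : tag_min L x.
  apply/allP => y y_L.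
  exact: tle_trans xt (ntle_tle (allP L_gt y y_L)).
rewrite gcE /= ltnS L_big /= tle_refl x_min /=; apply/all_filterP/allP => y y_L.
by move: (allP L_gt y y_L); apply: contraNN => /andP[yx _]; apply: tle_trans yx xt.
Qed.

Lemma all_tag_neq L t : all (fun y => se_tag y != t) L = (t \notin tags L).
Proof. by elim: L => //= y L ->; rewrite in_cons negb_or eq_sym. Qed.

Section ServerStep.
Variables (sg : seq (SEntry E)) (L : seq (SEntry E)).
Hypothesis L_wf : list_wf sg L.

Lemma server_step_wf (s : S) c m : list_wf sg (server_step delta sg L s c m).1.
Proof.
case: m => //= rid x; rewrite all_tag_neq.
have [x_sg|] //= := boolP (x \in sg); have [|x_L] //= := boolP (se_tag x \in tags L).
have [L_uniq L_small L_sg] := L_wf; have xL_uniq : uniq (tags (x :: L)) by rewrite /= x_L.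
split; [exact: uniq_gc|exact: size_gc|].
by move=> y /mem_gc; rewrite in_cons => /predU1P[->|/L_sg].
Qed.

Lemma server_step_covers (s : S) c m t : covers L t -> covers (server_step delta sg L s c m).1 t.
Proof.
case: m => //= rid x; rewrite all_tag_neq.
have [x_sg|] //= := boolP (x \in sg); have [|x_L] //= := boolP (se_tag x \in tags L).
have [L_uniq L_small _] := L_wf.
by apply: covers_gc_cons => //=; rewrite x_L.
Qed.

Lemma server_put_covers (s : S) c rid x : x \in sg ->
  covers (server_step delta sg L s c (Put rid x)).1 (se_tag x).
Proof.
move=> x_sg /=; rewrite all_tag_neq x_sg /=.
have [x_L|x_L] /= := boolP (se_tag x \in tags L); first by rewrite /covers x_L.
have [L_uniq L_small _] := L_wf.
by apply: covers_gc => /=; rewrite ?x_L ?L_uniq // /covers mem_head.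
Qed.

End ServerStep.
End Storage.

(** * Histories *)

Section History.
Variable V : Type.
Implicit Types (h : seq (Event V)) (e : Event V).

Definition pending h c i : Prop := [/\ i < size h, ev_client (evt h i) = c &
  forall j, i < j -> j < size h -> ev_client (evt h j) != c].

Lemma evt_rcons h e i : i < size h -> evt (rcons h e) i = evt h i.
Proof. by move=> i_h; rewrite /evt nth_rcons i_h. Qed.

Lemma evt_rcons_size h e : evt (rcons h e) (size h) = e.
Proof. by rewrite /evt nth_rcons ltnn eqxx. Qed.

Lemma evt_lt_size h i : ~~ is_rinv (evt h i) -> i < size h.
Proof. by rewrite ltnNge; apply: contra => h_i; rewrite /evt nth_default. Qed.

Lemma pending_lt_size h c i : pending h c i -> i < size h.
Proof. by case. Qed.

Lemma pending_rcons_other h e c i : ev_client e != c ->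
  pending (rcons h e) c i <-> pending h c i.
Proof.
move=> e_c; rewrite /pending size_rcons; split=> -[i_h i_c later].
  have i_lt : i < size h.
    move: i_h; rewrite ltnS leq_eqVlt => /predU1P[i_eq|//].
    by move: e_c; rewrite -i_c i_eq evt_rcons_size eqxx.
  split=> // [|j ij j_h]; first by rewrite -(evt_rcons e i_lt).
  by rewrite -(evt_rcons e j_h) later // ltnW.
split=> [||j ij]; [exact: ltnW|by rewrite evt_rcons|].
by rewrite ltnS leq_eqVlt => /predU1P[->|j_h]; rewrite ?evt_rcons_size ?evt_rcons ?later.
Qed.

Lemma pending_rcons_self h e c i : ev_client e = c ->
  pending (rcons h e) c i <-> i = size h.
Proof.
move=> e_c; rewrite /pending size_rcons; split=> [[i_h _ later]|->].
  apply/eqP; rewrite eqn_leq -ltnS i_h leqNgt; apply/negP => i_lt.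
  by move: (later _ i_lt (ltnSn _)); rewrite evt_rcons_size e_c eqxx.
by split=> [||j ij]; rewrite ?evt_rcons_size // ltnS leqNgt ij.
Qed.

Lemma exists_pending h c i : i < size h -> ev_client (evt h i) = c ->
  exists2 p, pending h c p & i <= p.
Proof.
elim/last_ind: h i => [//|h e IH] i.
rewrite size_rcons ltnS leq_eqVlt => /predU1P[->|i_h].
  by rewrite evt_rcons_size => e_c; exists (size h) => //; apply/pending_rcons_self.
have [e_c _|e_c] := eqVneq (ev_client e) c.
  by exists (size h); [apply/pending_rcons_self|exact: ltnW].
rewrite evt_rcons // => i_c; have [p p_pend ip] := IH i i_h i_c.
by exists p => //; apply/pending_rcons_other.
Qed.

Lemma done_before_rcons h e i j : j <= size h ->
  done_before (rcons h e) i j = done_before h i j.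
Proof.
move=> j_h; apply: eq_in_has => x; rewrite mem_iota => /andP[ix xj].
by rewrite !evt_rcons //; lia.
Qed.

Lemma done_before_leq h i j j' : j <= j' -> done_before h i j -> done_before h i j'.
Proof.
move=> jj' /hasP[x x_in x_resp]; apply/hasP; exists x => //.
by move: x_in; rewrite !mem_iota; lia.
Qed.

Lemma concurrent_rcons h e i j : i < size h -> j < size h ->
  concurrent (rcons h e) i j = concurrent h i j.
Proof. by move=> i_h j_h; rewrite /concurrent !done_before_rcons // ltnW. Qed.

Lemma write_concurrency_le_rcons delta h e :
  write_concurrency_le delta (rcons h e) -> write_concurrency_le delta h.
Proof.
move=> conc ir ir_h ir_inv; apply: leq_trans (conc ir _ _); last 2 first.
- by rewrite size_rcons ltnS ltnW.
- by rewrite evt_rcons.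
rewrite size_rcons -addn1 iotaD count_cat add0n -[X in X <= _]addn0 leq_add //.
apply/eq_leq/eq_in_count => x; rewrite mem_iota add0n => /andP[_ x_h].
by rewrite concurrent_rcons // evt_rcons.
Qed.

Definition wresp_tag e : option Tag := if e is ERespW _ t then Some t else None.

Lemma exists_max_wresp h n jw cw tw : jw < n -> evt h jw = ERespW cw tw ->
  exists jm cm m, [/\ jm < n, evt h jm = ERespW cm m &
    forall j c t, j < n -> evt h j = ERespW c t -> tle t m].
Proof.
move=> jw_n jw_resp.
pose resps := [seq j <- iota 0 n | wresp_tag (evt h j)].
pose tag_of j := odflt t0 (wresp_tag (evt h j)).
have [|jm jm_resps jm_max] := seq_min_rel (r := fun j1 j2 => tle (tag_of j2) (tag_of j1))
  (fun _ _ => tle_total _ _) (fun _ _ _ xy yz => tle_trans yz xy) (s := resps).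
  have : jw \in resps by rewrite mem_filter jw_resp mem_iota.
  by case: (resps).
move: jm_resps; rewrite mem_filter mem_iota add0n /=.
case jm_resp: (evt h jm) => [? ?|cm m|?|? ? ?] //= jm_n.
exists jm, cm, m; split=> // j c t j_n j_resp.
by have := allP jm_max j; rewrite mem_filter mem_iota j_n /tag_of jm_resp j_resp; apply.
Qed.

End History.

(** * The invariant of reachable states *)

Section Protocol.
Variables (S : finType) (B : {set S}) (k delta : nat) (V E : eqType)
  (enc : V -> 'I_#|S| -> E) (dec : seq E -> V) (v0 : V).
Notation St := (State S V E).
Notation CSt := (CState S V E).
Notation Msg := (NetMsg S E).
Notation hseq := (seq (Event V)).
Notation covers := (covers delta).
Notation Idle := (Idle S V E).
Notation WPut := (WPut V E).
Notation WTag := (WTag E).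
Notation RGet := (RGet V).
Notation RPut := (RPut E).

Definition write_tag (h : hseq) (cls : nat -> CSt) iw (t : Tag) : Prop :=
  exists v, evt h iw = EInvW t.2 v /\
   ((exists j, [/\ iw < j, j < size h, evt h j = ERespW t.2 t &
                 forall j', iw < j' -> j' < j -> ev_client (evt h j') != t.2])
    \/ (pending h t.2 iw /\ exists rid A, cls t.2 = WPut rid t A)).

(* The ghost map [g]: [g jw] is the quorum that acknowledged the write whose
   response is the event at position [jw]. *)
Definition covers_prior_writes (g : nat -> {set S}) (h : hseq) ir (s : S)
    (L : seq (SEntry E)) : Prop :=
  forall jw c t, jw < ir -> evt h jw = ERespW c t -> s \in g jw -> covers L t.

Definition rid_of (m : Msg) : nat :=
  match m with
  | ToServer _ _ (QTag r) | ToServer _ _ (QData r) | ToServer _ _ (Put r _)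
  | ToClient _ _ (RTag r _) | ToClient _ _ (RData r _) | ToClient _ _ (Ack r) => r
  end.

Record NetInv (st : St) (g : nat -> {set S}) : Prop := {
  lists_wf : forall s, list_wf delta (signed st) (lists st s);
  (* so that no message in transit can be taken for a reply to a new request *)
  net_fresh : forall m, List.In m (net st) -> rid_of m < ctr st;
  net_put : forall c s rid x t A, List.In (ToServer c s (Put rid x)) (net st) ->
    cl st c = WPut rid t A -> se_tag x = t /\ x \in signed st;
  net_ack : forall s c rid t A, s \notin B -> List.In (ToClient s c (Ack E rid)) (net st) ->
    cl st c = WPut rid t A -> covers (lists st s) t;
  net_data : forall s c rid L, s \notin B -> List.In (ToClient s c (RData rid L)) (net st) ->
    {subset L <= signed st} /\ forall R ir, cl st c = RGet rid R ->
      pending (hist st) c ir -> covers_prior_writes g (hist st) ir s L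
}.

Record OpInv (st : St) (g : nat -> {set S}) : Prop := {
  signed_tags : forall x, x \in signed st ->
    se_tag x = t0 \/ exists iw, write_tag (hist st) (cl st) iw (se_tag x);
  wtag_pending : forall c rid v R, cl st c = WTag rid v R ->
    exists iw v', pending (hist st) c iw /\ evt (hist st) iw = EInvW c v';
  wput_pending : forall c rid t A, cl st c = WPut rid t A ->
    exists iw v', pending (hist st) c iw /\ evt (hist st) iw = EInvW c v';
  wput_acks : forall c rid t A s, cl st c = WPut rid t A -> s \in A -> s \notin B ->
    covers (lists st s) t;
  rget_replies : forall c rid R, cl st c = RGet rid R -> exists ir,
    [/\ pending (hist st) c ir, evt (hist st) ir = EInvR c &
        forall s L, R s = Some L -> {subset L <= signed st} /\
                                   (s \notin B -> covers_prior_writes g (hist st) ir s L)];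
  rput_tag : forall c rid t v A, cl st c = RPut rid t v A -> exists ir,
    [/\ pending (hist st) c ir, evt (hist st) ir = EInvR c &
        (write_concurrency_le delta (hist st) ->
         forall jw c' t', jw < ir -> evt (hist st) jw = ERespW c' t' -> tle t' t)];
  idle_responded : forall c i, cl st c = Idle -> pending (hist st) c i ->
    is_resp (evt (hist st) i)
}.

Record HistInv (st : St) (g : nat -> {set S}) : Prop := {
  invocations_sequential : forall i i', i < i' -> i' < size (hist st) ->
    ~~ is_resp (evt (hist st) i) -> ~~ is_resp (evt (hist st) i') ->
    ev_client (evt (hist st) i) = ev_client (evt (hist st) i') ->
    done_before (hist st) i i';
  write_quorum : forall jw c t, jw < size (hist st) -> evt (hist st) jw = ERespW c t ->
    qsize S k <= #|g jw| /\ forall s, s \in g jw -> s \notin B -> covers (lists st s) t;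
  read_after_write : write_concurrency_le delta (hist st) -> forall i j c t v jw c' t',
    i < j -> j < size (hist st) -> evt (hist st) i = EInvR c ->
    evt (hist st) j = ERespR c t v -> ~~ done_before (hist st) i j ->
    jw < i -> evt (hist st) jw = ERespW c' t' -> tle t' t
}.

Arguments net_fresh {st g} _ {m}.
Arguments net_put {st g} _ {c s rid x t A}.
Arguments net_ack {st g} _ {s c rid t A}.
Arguments net_data {st g} _ {s c rid L}.
Arguments signed_tags {st g} _ {x}.
Arguments wtag_pending {st g} _ {c rid v R}.
Arguments wput_pending {st g} _ {c rid t A}.
Arguments wput_acks {st g} _ {c rid t A s}.
Arguments rget_replies {st g} _ {c rid R}.
Arguments rput_tag {st g} _ {c rid t v A}.
Arguments idle_responded {st g} _ {c i}.
Arguments invocations_sequential {st g} _ {i i'}.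
Arguments write_quorum {st g} _ {jw c t}.
Arguments read_after_write {st g} _ _ {i j c t v jw c' t'}.

Definition Inv st g : Prop := [/\ NetInv st g, OpInv st g & HistInv st g].

Lemma inv_init : Inv (init_state enc v0) (fun _ => set0).
Proof.
split; split=> //=.
- move=> s; split=> // x; rewrite inE => /eqP ->.
  by apply/mapP; exists s; rewrite ?mem_enum.
- by move=> x /mapP[s _ ->]; left.
- by move=> ? ? ? [].
Qed.

Lemma setclP (f : nat -> CSt) c X c' Y : setcl f c X c' = Y ->
  (c' = c /\ X = Y) \/ (c' != c /\ f c' = Y).
Proof. by rewrite /setcl; case: (eqVneq c' c) => [->|ne]; [left|right]. Qed.

Lemma write_tag_ext (h h' : hseq) cls cls' iw t : write_tag h cls iw t ->
  (forall j, j < size h -> evt h' j = evt h j) -> size h <= size h' ->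
  (forall rid A, cls t.2 = WPut rid t A -> pending h t.2 iw ->
     (exists rid' A', cls' t.2 = WPut rid' t A' /\ pending h' t.2 iw) \/
     (evt h' (size h) = ERespW t.2 t /\ size h < size h')) ->
  write_tag h' cls' iw t.
Proof.
move=> [v [iw_inv iw_tag]] h_h' hh' cls_cls'.
have iw_h : iw < size h by apply: evt_lt_size; rewrite iw_inv.
exists v; split; first by rewrite h_h'.
case: iw_tag => [[j [iwj j_h j_resp j_first]]|[iw_pend [rid [A cls_t]]]].
  left; exists j; split=> //; [exact: leq_trans hh'|by rewrite h_h'|].
  by move=> j' iwj' j'j; rewrite h_h' ?(ltn_trans j'j j_h) ?j_first.
case: (cls_cls' rid A cls_t iw_pend) => [[rid' [A' [cls'_t iw_pend']]]|[resp hh'_lt]].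
  by right; split=> //; exists rid', A'.
left; exists (size h); split=> // j' iwj' j'h.
by rewrite h_h' //; case: iw_pend => _ _; apply.
Qed.

Lemma write_tag_setcl h cls c X iw t : (forall rid t A, cls c <> WPut rid t A) ->
  write_tag h cls iw t -> write_tag h (setcl cls c X) iw t.
Proof.
move=> c_nput wt; apply: write_tag_ext wt _ (leqnn _) _ => // rid A cls_t iw_pend.
left; exists rid, A; split=> //; rewrite /setcl.
by case: eqP cls_t => // ->; move/c_nput.
Qed.

Lemma write_tag_fun h cls i t1 t2 : write_tag h cls i t1 -> write_tag h cls i t2 -> t1 = t2.
Proof.
move=> [v1 [i_inv1 wt1]] [v2 [i_inv2 wt2]].
have w12 : t1.2 = t2.2 by move: i_inv1; rewrite i_inv2 => -[].
case: wt1 => [[j1 [ij1 j1_h j1_resp j1_first]]|[pend1 [r1 [A1 cls1]]]];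
  case: wt2 => [[j2 [ij2 j2_h j2_resp j2_first]]|[pend2 [r2 [A2 cls2]]]].
- case: (ltngtP j1 j2) => [j12|j21|j12].
  + by move: (j2_first j1 ij1 j12); rewrite j1_resp /= w12 eqxx.
  + by move: (j1_first j2 ij2 j21); rewrite j2_resp /= w12 eqxx.
  + by move: j1_resp; rewrite j12 j2_resp => -[].
- by case: pend2 => _ _ /(_ j1 ij1 j1_h); rewrite j1_resp /= w12 eqxx.
- by case: pend1 => _ _ /(_ j2 ij2 j2_h); rewrite j2_resp /= w12 eqxx.
- by move: cls1; rewrite w12 cls2 => -[].
Qed.

Lemma covers_prior_writes_ext g g' (h h' : hseq) ir s L :
  covers_prior_writes g h ir s L -> ir <= size h ->
  (forall j, j < size h -> evt h' j = evt h j) -> (forall j, j < size h -> g' j = g j) ->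
  covers_prior_writes g' h' ir s L.
Proof.
move=> prior ir_h h_h' g_g' jw c t jw_ir; have jw_h := leq_trans jw_ir ir_h.
by rewrite h_h' // g_g' //; apply: prior.
Qed.

Lemma server_replyP sg (L : seq (SEntry E)) (s : S) c m (y : Msg) :
  List.In y (server_step delta sg L s c m).2 ->
  match m with
  | QTag rid => exists x, y = ToClient s c (RTag rid x)
  | QData rid => y = ToClient s c (RData rid L)
  | Put rid _ => y = ToClient s c (Ack E rid)
  end.
Proof.
case: m => [rid|rid|rid x] /=; last by case=> [<-|].
  by case: maxentry => [x|] //= [<-|//]; exists x.
by case=> [<-|].
Qed.

Section ServerDelivery.
Variables (st : St) (g : nat -> {set S}) (n1 n2 : seq Msg) (c : nat) (s : S) (m : SMsg E).
Hypotheses (N : NetInv st g) (O : OpInv st g) (H : HistInv st g).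
Hypotheses (net_st : net st = n1 ++ ToServer c s m :: n2) (s_correct : s \notin B).
Local Notation reply := (server_step delta (signed st) (lists st s) s c m).
Local Notation st' := (mkState (upd (lists st) s reply.1) (n1 ++ n2 ++ reply.2)
                               (cl st) (signed st) (hist st) (ctr st)).

Lemma m_in_net : List.In (ToServer c s m) (net st).
Proof. by rewrite net_st; apply/List.in_app_iff; right; left. Qed.

Lemma covers_deliver s' t : covers (lists st s') t -> covers (lists st' s') t.
Proof.
rewrite /= /upd; case: eqP => [->|//].
exact: (server_step_covers (lists_wf N s)).
Qed.

Lemma net_inv_deliver : NetInv st' g.
Proof.
split=> /=.
- move=> s'; rewrite /upd; case: eqP => _; last exact: lists_wf N s'.
  exact: (server_step_wf (lists_wf N s)).
- move=> y /(In_app_remove net_st)[/(net_fresh N)//|/server_replyP].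
  have := net_fresh N m_in_net.
  by case: m => [rid|rid|rid x] /= fresh => [[x' ->]|->|->].
- move=> c' s' rid x t A /(In_app_remove net_st)[|/server_replyP].
    by apply: (net_put N).
  by case: m => [rid'|rid'|rid' x'] => [[? //]|//|//].
- move=> s' c' rid t A s'_correct /(In_app_remove net_st)[ack cl_c'|/server_replyP].
    exact/covers_deliver/(net_ack N s'_correct ack cl_c').
  case: m m_in_net => [rid'|rid'|rid' x'] m_in => [[? //]|//|[-> -> ->] cl_c].
  have [<- x'_sg] := net_put N m_in cl_c.
  by rewrite /upd eqxx; apply: (server_put_covers (lists_wf N s)).
- move=> s' c' rid L s'_correct /(In_app_remove net_st)[|/server_replyP].
    exact: (net_data N).
  case: m => [rid'|rid'|rid' x'] => [[? //]|[-> -> -> ->]|//].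
  split; first by case: (lists_wf N s).
  move=> R ir _ [ir_h _ _] jw c'' t jw_ir jw_resp s_g.
  by have [_] := write_quorum H (ltn_trans jw_ir ir_h) jw_resp; apply.
Qed.

Lemma inv_deliver : Inv st' g.
Proof.
split; first exact: net_inv_deliver.
- case: (O) => *; split=> //= c' rid t A s' cl_c' s'_A s'_correct.
  exact/covers_deliver/(wput_acks O cl_c' s'_A s'_correct).
- case: (H) => *; split=> //= jw c' t jw_h jw_resp.
  have [quorum covered] := write_quorum H jw_h jw_resp.
  by split=> // s' s'_g s'_correct; apply/covers_deliver/covered.
Qed.

End ServerDelivery.

Section RecvInversion.
Variables (sg : seq (SEntry E)) (s : S) (m : CMsg E).
Implicit Type cs : CSt.

Lemma client_recv_Idle cs : client_recv sg cs s m = Idle -> cs = Idle.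
Proof.
case: cs => [|rid' v' R'|rid' t' A'|rid' R'|rid' t' v' A'] //=;
  case: m => [r x|r L|r] //=; by case: ifP.
Qed.

Lemma client_recv_WTag cs rid v R : client_recv sg cs s m = WTag rid v R ->
  exists R0, cs = WTag rid v R0.
Proof.
case: cs => [|rid' v' R'|rid' t' A'|rid' R'|rid' t' v' A'] //=;
  case: m => [r x|r L|r] //=; try (by case: ifP); try (by case=> <- <- _; eexists).
by case: ifP => _ [<- <- _]; eexists.
Qed.

Lemma client_recv_WPut cs rid t A : client_recv sg cs s m = WPut rid t A ->
  exists A0, cs = WPut rid t A0 /\ (A = A0 \/ A = s |: A0 /\ m = Ack E rid).
Proof.
case: cs => [|rid' v' R'|rid' t' A'|rid' R'|rid' t' v' A'] //=;
  case: m => [r x|r L|r] //=; try (by case: ifP);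
  try (by case=> <- <- <-; eexists; split; [|left]).
by case: ifP => [/eqP -> [<- <- <-]|_ [<- <- <-]]; eexists; split; eauto.
Qed.

Lemma client_recv_RGet cs rid R : client_recv sg cs s m = RGet rid R ->
  exists R0, cs = RGet rid R0 /\ (R = R0 \/ exists L, [/\ m = RData rid L, R0 s = None &
      R = upd R0 s (Some [seq x <- L | x \in sg])]).
Proof.
case: cs => [|rid' v' R'|rid' t' A'|rid' R'|rid' t' v' A'] //=;
  case: m => [r x|r L|r] //=; try (by case: ifP);
  try (by case=> <- <-; eexists; split; [|left]).
case: ifP => [/andP[/eqP -> /eqP R's] [<- <-]|_ [<- <-]]; eexists; split; eauto.
by right; exists L.
Qed.

Lemma client_recv_RPut cs rid t v A : client_recv sg cs s m = RPut rid t v A ->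
  exists A0, cs = RPut rid t v A0.
Proof.
case: cs => [|rid' v' R'|rid' t' A'|rid' R'|rid' t' v' A'] //=;
  case: m => [r x|r L|r] //=; try (by case: ifP); try (by case=> <- <- <- _; eexists).
by case: ifP => _ [<- <- <- _]; eexists.
Qed.

Lemma client_recv_WPut_stays rid t A :
  exists A1, client_recv sg (WPut rid t A) s m = WPut rid t A1.
Proof. by case: m => [r x|r L|r] /=; try case: ifP; eexists. Qed.

End RecvInversion.

Section ClientReceive.
Variables (st : St) (g : nat -> {set S}) (net' : seq Msg) (c : nat) (s : S) (m : CMsg E).
Hypotheses (N : NetInv st g) (O : OpInv st g) (H : HistInv st g).
Hypotheses (net'_sub : forall y, List.In y net' -> List.In y (net st))
           (m_sent : s \notin B -> List.In (ToClient s c m) (net st)).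
Local Notation cl' := (setcl (cl st) c (client_recv (signed st) (cl st c) s m)).
Local Notation st' := (mkState (lists st) net' cl' (signed st) (hist st) (ctr st)).

Lemma recv_Idle c' : cl' c' = Idle -> cl st c' = Idle.
Proof. by case/setclP => [[-> /client_recv_Idle]|[_ ->]]. Qed.

Lemma recv_WTag c' rid v R : cl' c' = WTag rid v R -> exists R0, cl st c' = WTag rid v R0.
Proof. by case/setclP => [[-> /client_recv_WTag]|[_ ->]]; last exists R. Qed.

Lemma recv_WPut c' rid t A : cl' c' = WPut rid t A -> exists A0, cl st c' = WPut rid t A0 /\
  (A = A0 \/ [/\ c' = c, A = s |: A0 & m = Ack E rid]).
Proof.
case/setclP => [[-> /client_recv_WPut[A0 [-> A_A0]]]|[_ ->]]; last by exists A; split=> //; left.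
by exists A0; split=> //; case: A_A0 => [->|[-> ->]]; [left|right].
Qed.

Lemma recv_RGet c' rid R : cl' c' = RGet rid R -> exists R0, cl st c' = RGet rid R0 /\
  (R = R0 \/ exists L, [/\ c' = c, m = RData rid L, R0 s = None &
                          R = upd R0 s (Some [seq x <- L | x \in signed st])]).
Proof.
case/setclP => [[-> /client_recv_RGet[R0 [-> R_R0]]]|[_ ->]]; last by exists R; split=> //; left.
by exists R0; split=> //; case: R_R0 => [->|[L [? ? ?]]]; [left|right; exists L].
Qed.

Lemma recv_RPut c' rid t v A : cl' c' = RPut rid t v A -> exists A0, cl st c' = RPut rid t v A0.
Proof. by case/setclP => [[-> /client_recv_RPut]|[_ ->]]; last exists A. Qed.

Lemma recv_WPut_stays c' rid t A : cl st c' = WPut rid t A -> exists A1, cl' c' = WPut rid t A1.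
Proof.
by rewrite /setcl; case: eqP => [->|_ ->]; [move=> ->; apply: client_recv_WPut_stays|exists A].
Qed.

Lemma net_inv_recv : NetInv st' g.
Proof.
split=> //=.
- exact: lists_wf N.
- by move=> y /net'_sub /(net_fresh N).
- move=> c' s' rid x t A /net'_sub put /recv_WPut[A0 [cl_c' _]].
  exact: (net_put N put cl_c').
- move=> s' c' rid t A s'_correct /net'_sub ack /recv_WPut[A0 [cl_c' _]].
  exact: (net_ack N s'_correct ack cl_c').
- move=> s' c' rid L s'_correct /net'_sub data.
  have [L_sg L_prior] := net_data N s'_correct data; split=> // R ir /recv_RGet[R0 [cl_c' _]].
  exact: L_prior cl_c'.
Qed.

Lemma op_inv_recv : OpInv st' g.
Proof.
split=> /=.
- move=> x /(signed_tags O)[->|[iw wt]]; [by left|right; exists iw].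
  apply: write_tag_ext wt _ (leqnn _) _ => // rid A cl_t pend; left.
  by have [A1 cl'_t] := recv_WPut_stays cl_t; exists rid, A1.
- by move=> c' rid v R /recv_WTag[R0 /(wtag_pending O)].
- by move=> c' rid t A /recv_WPut[A0 [/(wput_pending O)]].
- move=> c' rid t A s' /recv_WPut[A0 [cl_c' [->|[c'c -> m_ack]]]] s'_A s'_correct.
    exact: (wput_acks O cl_c' s'_A s'_correct).
  move: s'_A; rewrite in_setU1 => /predU1P[s's|s'_A0].
    subst s' c' m; exact: (net_ack N s'_correct (m_sent s'_correct) cl_c').
  exact: (wput_acks O cl_c' s'_A0 s'_correct).
- move=> c' rid R /recv_RGet[R0 [cl_c' R_R0]].
  have [ir [pend ir_inv replies]] := rget_replies O cl_c'; exists ir; split=> // s' L.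
  case: R_R0 => [->|[L0 [c'c m_data _ ->]]]; first exact: replies.
  rewrite /upd; case: eqP => [s's [<-]|_]; last exact: replies.
  subst s' c' m; split=> [x|s_correct]; first by rewrite mem_filter => /andP[].
  have [L0_sg L0_prior] := net_data N s_correct (m_sent s_correct).
  by rewrite (all_filterP (introT allP L0_sg)); apply: L0_prior cl_c' pend.
- by move=> c' rid t v A /recv_RPut[A0 /(rput_tag O)].
- by move=> c' i /recv_Idle; apply: (idle_responded O).
Qed.

Lemma inv_recv : Inv st' g.
Proof. by split; [exact: net_inv_recv|exact: op_inv_recv|case: H]. Qed.

End ClientReceive.

Section Invoke.
Variables (st : St) (g : nat -> {set S}) (c : nat) (e : Event V) (X : CSt)
  (nt : seq Msg).
Hypotheses (N : NetInv st g) (O : OpInv st g) (H : HistInv st g).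
Hypotheses (c_idle : cl st c = Idle)
  (X_e : (exists v, e = EInvW c v /\ X = WTag (ctr st) v (fun _ => None)) \/
         (e = EInvR c /\ X = RGet (ctr st) (fun _ => None)))
  (nt_queries : forall y, List.In y nt ->
     exists s, y = ToServer c s (QTag E (ctr st)) \/ y = ToServer c s (QData E (ctr st))).
Local Notation h := (hist st).
Local Notation st' := (mkState (lists st) (net st ++ nt) (setcl (cl st) c X) (signed st)
                               (rcons h e) (ctr st).+1).

Lemma invoke_client : ev_client e = c.
Proof. by case: X_e => [[v [-> _]]|[-> _]]. Qed.

Lemma invoke_not_resp : ~~ is_resp e.
Proof. by case: X_e => [[v [-> _]]|[-> _]]. Qed.

Lemma invoke_phase : [/\ X <> Idle, forall rid t A, X <> WPut rid t A
                        & forall rid t v A, X <> RPut rid t v A].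
Proof. by case: X_e => [[v [_ ->]]|[_ ->]]. Qed.

Lemma pending_invoke_other c' i : c' != c -> pending (rcons h e) c' i <-> pending h c' i.
Proof. by move=> c'c; apply: pending_rcons_other; rewrite invoke_client eq_sym. Qed.

Lemma covers_prior_writes_invoke ir s L : ir < size h ->
  covers_prior_writes g h ir s L -> covers_prior_writes g (rcons h e) ir s L.
Proof.
by move=> ir_h prior; apply: covers_prior_writes_ext prior (ltnW ir_h) _ _ => // j /evt_rcons.
Qed.

Lemma net_inv_invoke : NetInv st' g.
Proof.
have [_ X_nput _] := invoke_phase.
split=> //=; first exact: lists_wf N.
- move=> y /List.in_app_iff[/(net_fresh N)/ltnW //|/nt_queries[s [->|->]]] //.
- move=> c' s' rid x t A /List.in_app_iff[put|/nt_queries[s [|]] //].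
  by case/setclP=> [[_ /X_nput]|[_ /(net_put N put)]].
- move=> s' c' rid t A s'_correct /List.in_app_iff[ack|/nt_queries[s [|]] //].
  by case/setclP=> [[_ /X_nput]|[_ /(net_ack N s'_correct ack)]].
- move=> s' c' rid L s'_correct /List.in_app_iff[data|/nt_queries[s [|]] //].
  have [L_sg L_prior] := net_data N s'_correct data; split=> // R ir.
  case/setclP=> [[-> X_R] _|[c'c cl_c'] /(pending_invoke_other _ c'c) pend].
    move: (net_fresh N data); case: X_e X_R => [[v [_ ->]]|[_ ->]] // [<-].
    by rewrite ltnn.
  exact/covers_prior_writes_invoke/(L_prior _ _ cl_c' pend)/(pending_lt_size pend).
Qed.

Lemma op_inv_invoke : OpInv st' g.
Proof.
have [X_nidle X_nput X_nrput] := invoke_phase.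
split=> /=.
- move=> x /(signed_tags O)[->|[iw wt]]; [by left|right; exists iw].
  apply: write_tag_ext wt _ _ _ => [j /evt_rcons //||rid A cl_t pend].
    by rewrite size_rcons.
  have t_c : (se_tag x).2 != c by apply/eqP => t_c; move: cl_t; rewrite t_c c_idle.
  left; exists rid, A; split; first by rewrite /setcl (negbTE t_c).
  exact/pending_invoke_other.
- move=> c' rid v R /setclP[[-> X_R]|[c'c /(wtag_pending O)[iw [v' [pend iw_inv]]]]].
    case: X_e X_R => [[v' [-> ->]] _|[_ ->] //].
    by exists (size h), v'; rewrite evt_rcons_size; split=> //; apply/pending_rcons_self.
  exists iw, v'; split; first exact/pending_invoke_other.
  by rewrite evt_rcons ?(pending_lt_size pend).
- move=> c' rid t A /setclP[[_ /X_nput]//|[c'c /(wput_pending O)[iw [v' [pend iw_inv]]]]].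
  exists iw, v'; split; first exact/pending_invoke_other.
  by rewrite evt_rcons ?(pending_lt_size pend).
- move=> c' rid t A s /setclP[[_ /X_nput]//|[_ cl_c']].
  exact: (wput_acks O cl_c').
- move=> c' rid R /setclP[[-> X_R]|[c'c /(rget_replies O)[ir [pend ir_inv replies]]]].
    case: X_e X_R => [[v [_ ->]] //|[-> ->] [_ <-]].
    by exists (size h); rewrite evt_rcons_size; split=> //; apply/pending_rcons_self.
  have ir_h := pending_lt_size pend.
  exists ir; split; [exact/pending_invoke_other|by rewrite evt_rcons|].
  move=> s L /replies[L_sg L_prior]; split=> // s_correct.
  exact/covers_prior_writes_invoke/L_prior.
- move=> c' rid t v A /setclP[[_ /X_nrput]//|[c'c /(rput_tag O)[ir [pend ir_inv tag_ok]]]].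
  have ir_h := pending_lt_size pend.
  exists ir; split; [exact/pending_invoke_other|by rewrite evt_rcons|].
  move=> /write_concurrency_le_rcons conc jw c'' t' jw_ir.
  by rewrite evt_rcons ?(ltn_trans jw_ir ir_h) //; apply: tag_ok.
- move=> c' i /setclP[[_ /X_nidle]//|[c'c cl_c'] /(pending_invoke_other _ c'c) pend].
  by rewrite evt_rcons ?(pending_lt_size pend) //; apply: (idle_responded O cl_c').
Qed.

Lemma done_before_invoke i : i < size h -> ~~ is_resp (evt h i) -> ev_client (evt h i) = c ->
  done_before (rcons h e) i (size h).
Proof.
move=> i_h i_inv i_c; have [p pend ip] := exists_pending i_h i_c.
have p_resp := idle_responded O c_idle pend.
have ip_lt : i < p by rewrite ltn_neqAle ip andbT; apply: contraNneq i_inv => ->.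
apply/hasP; exists p; first by rewrite mem_iota; have := pending_lt_size pend; lia.
by case: pend => p_h p_c _; rewrite evt_rcons // p_resp evt_rcons // i_c p_c eqxx.
Qed.

Lemma hist_inv_invoke : HistInv st' g.
Proof.
have e_c := invoke_client; have e_inv := invoke_not_resp.
split=> /=.
- move=> i i' ii'; rewrite size_rcons ltnS leq_eqVlt => /predU1P[i'E|i'_h].
    subst i'; rewrite evt_rcons_size evt_rcons // e_c => i_inv _.
    exact: done_before_invoke.
  have i_h := ltn_trans ii' i'_h.
  rewrite done_before_rcons ?(ltnW i'_h) // (evt_rcons _ i_h) (evt_rcons _ i'_h).
  exact: (invocations_sequential H).
- move=> jw c' t; rewrite size_rcons ltnS leq_eqVlt => /predU1P[->|jw_h].
    by rewrite evt_rcons_size => e_resp; move: e_inv; rewrite e_resp.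
  by rewrite evt_rcons //; apply: (write_quorum H).
- move=> /write_concurrency_le_rcons conc i j c' t v jw c'' t' ij.
  rewrite size_rcons ltnS leq_eqVlt => /predU1P[->|j_h].
    by rewrite evt_rcons_size => _ e_resp; move: e_inv; rewrite e_resp.
  have i_h := ltn_trans ij j_h.
  rewrite (evt_rcons _ i_h) (evt_rcons _ j_h) done_before_rcons ?(ltnW j_h) //.
  move=> i_inv j_resp nd jw_i.
  rewrite evt_rcons ?(ltn_trans jw_i i_h) //.
  exact: (read_after_write H conc ij j_h i_inv j_resp nd jw_i).
Qed.

Lemma inv_invoke : Inv st' g.
Proof. by split; [exact: net_inv_invoke|exact: op_inv_invoke|exact: hist_inv_invoke]. Qed.

End Invoke.

Section StartPut.
Variables (st : St) (g : nat -> {set S}) (c : nat) (t : Tag) (X : CSt)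
  (extra : seq (SEntry E)) (msgs : seq Msg).
Local Notation h := (hist st).
Local Notation cl' := (setcl (cl st) c X).
Hypotheses (N : NetInv st g) (O : OpInv st g) (H : HistInv st g).
Hypotheses (c_nput : forall rid t A, cl st c <> WPut rid t A)
  (X_cases : X = WPut (ctr st) t set0 \/ exists v, X = RPut (ctr st) t v set0)
  (X_wput : X = WPut (ctr st) t set0 ->
     exists iw v, pending h c iw /\ evt h iw = EInvW c v)
  (X_rput : forall v, X = RPut (ctr st) t v set0 -> exists ir,
     [/\ pending h c ir, evt h ir = EInvR c &
         (write_concurrency_le delta h ->
          forall jw c' t', jw < ir -> evt h jw = ERespW c' t' -> tle t' t)])
  (extra_tags : forall x, x \in extra ->
     se_tag x = t0 \/ exists iw, write_tag h cl' iw (se_tag x))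
  (msgs_puts : forall y, List.In y msgs -> exists s x,
     [/\ y = ToServer c s (Put (ctr st) x), x \in extra & se_tag x = t]).
Local Notation st' := (mkState (lists st) (net st ++ msgs) cl' (signed st ++ extra) h
                               (ctr st).+1).

Lemma start_put_phase : [/\ X <> Idle, forall rid v R, X <> WTag rid v R,
  forall rid R, X <> RGet rid R &
  forall rid t' A, X = WPut rid t' A -> [/\ rid = ctr st, t' = t & A = set0]].
Proof. by case: X_cases => [->|[v ->]]; split=> // ? ? ? [-> -> ->]. Qed.

Lemma signed_start_put x : x \in signed st -> x \in signed st ++ extra.
Proof. by rewrite mem_cat => ->. Qed.

Lemma net_inv_start_put : NetInv st' g.
Proof.
have [_ _ X_nrget X_wput_new] := start_put_phase.
split=> /=.
- by move=> s; have [? ? L_sg] := lists_wf N s; split=> // x /L_sg /signed_start_put.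
- move=> y /List.in_app_iff[/(net_fresh N)/ltnW //|/msgs_puts[s [x [-> _ _]]]] //.
- move=> c' s' rid x t' A /List.in_app_iff[put|/msgs_puts[s [x' [[-> _ -> ->] x'_extra x'_tag]]]].
    case/setclP=> [[c'c /X_wput_new[rid_ctr _ _]]|[_ /(net_put N put)[-> /signed_start_put]]] //.
    by move: (net_fresh N put); rewrite /= rid_ctr ltnn.
  case/setclP=> [[_ X_put]|[]]; last by rewrite eqxx.
  by have [_ -> _] := X_wput_new _ _ _ X_put; rewrite x'_tag mem_cat x'_extra orbT.
- move=> s' c' rid t' A s'_correct /List.in_app_iff[ack|/msgs_puts[? [? []]]] //.
  case/setclP=> [[c'c /X_wput_new[rid_ctr _ _]]|[_ /(net_ack N s'_correct ack)]] //.
  by move: (net_fresh N ack); rewrite /= rid_ctr ltnn.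
- move=> s' c' rid L s'_correct /List.in_app_iff[data|/msgs_puts[? [? []]]] //.
  have [L_sg L_prior] := net_data N s'_correct data.
  split=> [x /L_sg /signed_start_put //|R ir].
  by case/setclP=> [[_ /X_nrget]|[_ /L_prior]] //; apply.
Qed.

Lemma op_inv_start_put : OpInv st' g.
Proof.
have [X_nidle X_nwtag X_nrget X_wput_new] := start_put_phase.
split=> /=.
- move=> x; rewrite mem_cat => /orP[/(signed_tags O)[->|[iw wt]]|/extra_tags //].
    by left.
  by right; exists iw; apply: write_tag_setcl.
- by move=> c' rid v R /setclP[[_ /X_nwtag]|[_ /(wtag_pending O)]].
- move=> c' rid t' A /setclP[[-> X_put]|[_ /(wput_pending O)]] //.
  have [rid_ctr t'_t A0] := X_wput_new _ _ _ X_put.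
  by apply: X_wput; rewrite X_put rid_ctr t'_t A0.
- move=> c' rid t' A s /setclP[[_ /X_wput_new[_ _ ->]]|[_ cl_c']]; first by rewrite inE.
  exact: (wput_acks O cl_c').
- move=> c' rid R /setclP[[_ /X_nrget]|[_ /(rget_replies O)[ir [pend ir_inv replies]]]] //.
  exists ir; split=> // s L /replies[L_sg L_prior].
  by split=> // x /L_sg /signed_start_put.
- move=> c' rid t' v A /setclP[[-> X_rput_new]|[_ /(rput_tag O)]] //.
  have [rid_ctr t'_t A0] : [/\ rid = ctr st, t' = t & A = set0].
    by case: X_cases X_rput_new => [->|[? ->] [-> -> _ ->]].
  by rewrite t'_t; apply: (X_rput (v := v)); rewrite X_rput_new rid_ctr t'_t A0.
- by move=> c' i /setclP[[_ /X_nidle]|[_ /(idle_responded O)]] //; apply.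
Qed.

Lemma inv_start_put : Inv st' g.
Proof. by split; [exact: net_inv_start_put|exact: op_inv_start_put|case: H]. Qed.

End StartPut.

Section Respond.
Variables (st : St) (g : nat -> {set S}) (c : nat) (e : Event V) (rid : nat) (t : Tag)
  (A : {set S}).
Local Notation h := (hist st).
Local Notation cl' := (setcl (cl st) c Idle).
Local Notation g' := (fun j => if j == size h then A else g j).
Hypotheses (N : NetInv st g) (O : OpInv st g) (H : HistInv st g).
Hypothesis resp_cases :
  [/\ cl st c = WPut rid t A, e = ERespW c t & qsize S k <= #|A|] \/
  exists v, cl st c = RPut rid t v A /\ e = ERespR c t v.
Local Notation st' := (mkState (lists st) (net st) cl' (signed st) (rcons h e) (ctr st)).

Lemma respond_event : ev_client e = c /\ is_resp e.
Proof. by case: resp_cases => [[_ -> _]|[v [_ ->]]]. Qed.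

Lemma pending_respond_other c' i : c' != c -> pending (rcons h e) c' i <-> pending h c' i.
Proof. by move=> c'c; apply: pending_rcons_other; rewrite respond_event.1 eq_sym. Qed.

Lemma covers_prior_writes_respond ir s L : ir < size h ->
  covers_prior_writes g h ir s L -> covers_prior_writes g' (rcons h e) ir s L.
Proof.
move=> ir_h prior; apply: covers_prior_writes_ext prior (ltnW ir_h) _ _ => j j_h.
  exact: evt_rcons.
by rewrite (ltn_eqF j_h).
Qed.

Lemma net_inv_respond : NetInv st' g'.
Proof.
split=> //=; [exact: lists_wf N|exact: net_fresh N| | |].
- by move=> c' s rid' x t' A' put /setclP[[]|[_ /(net_put N put)]].
- by move=> s c' rid' t' A' s_correct ack /setclP[[]|[_ /(net_ack N s_correct ack)]].
- move=> s c' rid' L s_correct data; have [L_sg L_prior] := net_data N s_correct data.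
  split=> // R ir /setclP[[]//|[c'c cl_c']] /(pending_respond_other _ c'c) pend.
  exact/covers_prior_writes_respond/(L_prior _ _ cl_c' pend)/(pending_lt_size pend).
Qed.

Lemma write_tag_respond iw t' : write_tag h (cl st) iw t' -> write_tag (rcons h e) cl' iw t'.
Proof.
move=> wt; apply: write_tag_ext wt _ _ _ => [j /evt_rcons //||rid' A' cl_t pend].
  by rewrite size_rcons.
have [t_c|t_c] := eqVneq t'.2 c; last first.
  left; exists rid', A'; split; first by rewrite /setcl (negbTE t_c).
  exact/pending_respond_other.
right; rewrite evt_rcons_size size_rcons; split=> //.
move: cl_t; rewrite t_c.
by case: resp_cases => [[-> -> _]|[v [-> _]]] // [_ -> _].
Qed.

Lemma op_inv_respond : OpInv st' g'.
Proof.
split=> /=.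
- by move=> x /(signed_tags O)[->|[iw /write_tag_respond wt]]; [left|right; exists iw].
- move=> c' rid' v R /setclP[[]//|[c'c /(wtag_pending O)[iw [v' [pend iw_inv]]]]].
  exists iw, v'; split; first exact/pending_respond_other.
  by rewrite evt_rcons ?(pending_lt_size pend).
- move=> c' rid' t' A' /setclP[[]//|[c'c /(wput_pending O)[iw [v' [pend iw_inv]]]]].
  exists iw, v'; split; first exact/pending_respond_other.
  by rewrite evt_rcons ?(pending_lt_size pend).
- move=> c' rid' t' A' s /setclP[[]//|[_ cl_c']]; exact: (wput_acks O cl_c').
- move=> c' rid' R /setclP[[]//|[c'c /(rget_replies O)[ir [pend ir_inv replies]]]].
  have ir_h := pending_lt_size pend.
  exists ir; split; [exact/pending_respond_other|by rewrite evt_rcons|].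
  move=> s L /replies[L_sg L_prior]; split=> // s_correct.
  exact/covers_prior_writes_respond/L_prior.
- move=> c' rid' t' v A' /setclP[[]//|[c'c /(rput_tag O)[ir [pend ir_inv tag_ok]]]].
  have ir_h := pending_lt_size pend.
  exists ir; split; [exact/pending_respond_other|by rewrite evt_rcons|].
  move=> /write_concurrency_le_rcons conc jw c'' t'' jw_ir.
  by rewrite evt_rcons ?(ltn_trans jw_ir ir_h) //; apply: tag_ok.
- move=> c' i /setclP[[-> _]|[c'c cl_c']].
    by case: respond_event => e_c e_resp /(pending_rcons_self _ _ e_c) ->; rewrite evt_rcons_size.
  move=> /(pending_respond_other _ c'c) pend.
  by rewrite evt_rcons ?(pending_lt_size pend) //; apply: (idle_responded O cl_c').
Qed.

Lemma read_invocation_respond i ir : i < size h -> evt h i = EInvR c ->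
  ~~ done_before (rcons h e) i (size h) -> pending h c ir -> evt h ir = EInvR c -> i = ir.
Proof.
move=> i_h i_inv nd pend ir_inv; have ir_h := pending_lt_size pend.
case: (ltngtP i ir) => // [i_ir|ir_i].
  have := invocations_sequential H i_ir ir_h; rewrite i_inv ir_inv => /(_ isT isT erefl).
  by move/(done_before_leq (ltnW ir_h)); rewrite -(done_before_rcons e) // (negbTE nd).
by case: pend => _ _ /(_ i ir_i i_h); rewrite i_inv eqxx.
Qed.

Lemma hist_inv_respond : HistInv st' g'.
Proof.
have [_ e_resp] := respond_event.
split=> /=.
- move=> i i' ii'; rewrite size_rcons ltnS leq_eqVlt => /predU1P[->|i'_h].
    by rewrite evt_rcons_size e_resp.
  have i_h := ltn_trans ii' i'_h.
  rewrite done_before_rcons ?(ltnW i'_h) // (evt_rcons _ i_h) (evt_rcons _ i'_h).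
  exact: (invocations_sequential H).
- move=> jw c' t'; rewrite size_rcons ltnS leq_eqVlt => /predU1P[->|jw_h].
    rewrite evt_rcons_size eqxx.
    case: resp_cases => [[cl_c -> quorum] [_ <-]|[v [_ ->]] //]; split=> // s.
    exact: (wput_acks O cl_c).
  by rewrite evt_rcons // (ltn_eqF jw_h); apply: (write_quorum H).
- move=> /write_concurrency_le_rcons conc i j c' t' v jw c'' t'' ij.
  rewrite size_rcons ltnS leq_eqVlt => /predU1P[j_last|j_h]; last first.
    have i_h := ltn_trans ij j_h.
    rewrite (evt_rcons _ i_h) (evt_rcons _ j_h) done_before_rcons ?(ltnW j_h) //.
    move=> i_inv j_resp nd jw_i; rewrite evt_rcons ?(ltn_trans jw_i i_h) //.
    exact: (read_after_write H conc ij j_h i_inv j_resp nd jw_i).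
  subst j; rewrite (evt_rcons _ ij) evt_rcons_size => i_inv.
  case: resp_cases => [[_ e_def _]|[v' [cl_c e_def]]]; rewrite {1}e_def // => -[c'c <- _].
  subst c'.
  have [ir [pend ir_inv tag_ok]] := rput_tag O cl_c.
  move=> nd jw_i; have i_ir := read_invocation_respond ij i_inv nd pend ir_inv; subst ir.
  by rewrite evt_rcons ?(ltn_trans jw_i ij) //; apply: tag_ok.
Qed.

Lemma inv_respond : Inv st' g'.
Proof. by split; [exact: net_inv_respond|exact: op_inv_respond|exact: hist_inv_respond]. Qed.

End Respond.

(** * The read quorum *)

Lemma quorum_intersection (X Y : {set S}) : 3 * #|B| < #|S| - k ->
  qsize S k <= #|X| -> qsize S k <= #|Y| -> k <= #|(X :&: Y) :\: B|.
Proof.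
rewrite /qsize => hB hX hY.
have := cardsUI X Y; have : #|X :|: Y| <= #|S| by apply: max_card.
have := cardsID B (X :&: Y).
have : #|(X :&: Y) :&: B| <= #|B| by apply/subset_leq_card/subsetIr.
lia.
Qed.

Section ReadQuorum.
Variables (st : St) (g : nat -> {set S}) (c ir : nat) (m : Tag).
Local Notation h := (hist st).
Hypotheses (O : OpInv st g) (pend : pending h c ir) (ir_inv : evt h ir = EInvR c)
  (conc : write_concurrency_le delta h)
  (m_max : forall jw c' t, jw < ir -> evt h jw = ERespW c' t -> tle t m).

Lemma newer_write_concurrent iw t : write_tag h (cl st) iw t -> ~~ tle t m ->
  is_winv (evt h iw) && concurrent h iw ir.
Proof.
move=> [v [iw_inv wt]] t_new; have ir_h := pending_lt_size pend.
have iw_h : iw < size h by apply: evt_lt_size; rewrite iw_inv.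
rewrite iw_inv /concurrent /done_before /=; apply/andP; split; apply/negP; case/hasP => j.
  rewrite mem_iota iw_inv /= => /andP[iwj jir] /andP[_ /eqP j_c].
  have j_h : j < size h by lia.
  case: wt => [[j1 [iwj1 j1_h j1_resp j1_first]]|[[_ _ later] _]]; last first.
    by move: (later j iwj j_h); rewrite j_c eqxx.
  have j1j : j1 <= j.
    by rewrite leqNgt; apply/negP => jj1; move: (j1_first j iwj jj1); rewrite j_c eqxx.
  have j1_ir : j1 < ir by lia.
  by move: t_new; rewrite (m_max j1_ir j1_resp).
rewrite mem_iota => /andP[irj jiw] /andP[_ /eqP j_c]; have j_h : j < size h by lia.
by case: pend => _ c_ir later; move: (later j irj j_h); rewrite j_c c_ir eqxx.
Qed.

(* Distinct tags newer than [m] belong to distinct writes concurrent with the read. *)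
Lemma newer_tags_le_delta (L : seq (SEntry E)) : {subset L <= signed st} ->
  uniq (tags L) -> all (fun x => ~~ tle (se_tag x) m) L -> size L <= delta.
Proof.
move=> L_sg L_uniq L_new.
apply: leq_trans (conc (pending_lt_size pend) _); last by rewrite ir_inv.
rewrite -(size_map (@se_tag E)) -size_filter.
apply: (uniq_leq_size_rel (Q := write_tag h (cl st))) L_uniq _ (@write_tag_fun h (cl st)).
move=> _ /mapP[x x_L ->]; have x_new := allP L_new x x_L.
case: (signed_tags O (L_sg x x_L)) => [x_t0|[iw wt]].
  by move: x_new; rewrite x_t0 t0_tle.
exists iw => //; rewrite mem_filter (newer_write_concurrent wt x_new) mem_iota /=.
by case: wt => v [iw_inv _]; apply: evt_lt_size; rewrite iw_inv.
Qed.

Lemma covers_max_mem (L : seq (SEntry E)) : {subset L <= signed st} ->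
  covers L m -> m \in tags L.
Proof.
move=> L_sg /orP[//|/and3P[L_big L_uniq L_new]].
by move: L_big; rewrite ltnNge newer_tags_le_delta.
Qed.

End ReadQuorum.

Lemma rget_done_tag st g c rid R t : OpInv st g -> HistInv st g ->
  3 * #|B| < #|S| - k -> cl st c = RGet rid R -> qsize S k <= nreplies R ->
  (forall t', k <= nlists_with R t' -> tle t' t) -> exists ir,
  [/\ pending (hist st) c ir, evt (hist st) ir = EInvR c &
      (write_concurrency_le delta (hist st) ->
       forall jw c' t', jw < ir -> evt (hist st) jw = ERespW c' t' -> tle t' t)].
Proof.
move=> O H hB c_rget R_quorum t_max.
(* [m] is the largest tag written before the read: it is in every list the
   read gets from a correct member of its write quorum. *)
have [ir [pend ir_inv replies]] := rget_replies O c_rget.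
exists ir; split=> // conc jw c' t' jw_ir jw_resp.
have [jm [cm [m [jm_ir jm_resp m_max]]]] := exists_max_wresp jw_ir jw_resp.
apply: tle_trans (m_max _ _ _ jw_ir jw_resp) (t_max _ _).
have [quorum _] := write_quorum H (ltn_trans jm_ir (pending_lt_size pend)) jm_resp.
apply: leq_trans (quorum_intersection hB quorum R_quorum) (subset_leq_card _).
apply/subsetP => s; rewrite !inE => /andP[s_correct /andP[s_g]].
case R_s: (R s) => [L|//] _; have [L_sg L_prior] := replies s L R_s.
exact: (covers_max_mem O pend ir_inv conc m_max L_sg (L_prior s_correct _ _ _ jm_ir jm_resp s_g)).
Qed.

(** * Reachable states *)

Lemma put_triplesP c t v x : x \in put_triples enc c t v -> se_tag x = t.
Proof. by case/mapP => s _ ->. Qed.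

Lemma put_msgsP c rid t v (y : Msg) : List.In y (put_msgs enc c rid t v) ->
  exists s x, [/\ y = ToServer c s (Put rid x), x \in put_triples enc c t v & se_tag x = t].
Proof.
case/List.in_map_iff => s [<- _]; exists s, (t, frag enc v s, Some c).
by split=> //; apply/mapP; exists s; rewrite ?mem_enum.
Qed.

Lemma inv_write_start_put st g c rid v R : Inv st g -> cl st c = WTag rid v R ->
  let t := ((maxtag R).1.+1, c) in
  Inv (mkState (lists st) (net st ++ put_msgs enc c (ctr st) t v)
               (setcl (cl st) c (WPut (ctr st) t set0))
               (signed st ++ put_triples enc c t v) (hist st) (ctr st).+1) g.
Proof.
move=> [N O H] c_wtag t; have [iw [v' [pend iw_inv]]] := wtag_pending O c_wtag.
have c_nput rid' t' A : cl st c <> WPut rid' t' A by rewrite c_wtag.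
apply: (inv_start_put N O H c_nput) => [|||x /put_triplesP ->|]; last exact: put_msgsP.
- by left.
- by exists iw, v'.
- by [].
right; exists iw, v'; split=> //; right; split=> //.
by exists (ctr st), set0; rewrite /setcl eqxx.
Qed.

Lemma inv_read_start_put st g c rid R t : Inv st g -> 3 * #|B| < #|S| - k -> 0 < k ->
  cl st c = RGet rid R -> qsize S k <= nreplies R -> k <= nlists_with R t ->
  (forall t', k <= nlists_with R t' -> tle t' t) ->
  let v := dec (elems_with R t) in
  Inv (mkState (lists st) (net st ++ put_msgs enc c (ctr st) t v)
               (setcl (cl st) c (RPut (ctr st) t v set0))
               (signed st ++ put_triples enc c t v) (hist st) (ctr st).+1) g.
Proof.
move=> [N O H] hB hk c_rget R_quorum t_k t_max v.
have c_nput rid' t' A : cl st c <> WPut rid' t' A by rewrite c_rget.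
apply: (inv_start_put N O H c_nput) => [|||x /put_triplesP ->|]; last exact: put_msgsP.
- by right; exists v.
- by [].
- by move=> v' _; exact: (rget_done_tag O H hB c_rget R_quorum t_max).
have : 0 < nlists_with R t by apply: leq_trans hk t_k.
case/card_gt0P => s; rewrite inE; case R_s: (R s) => [L|//] /mapP[y y_L ->].
have [ir [_ _ /(_ s L R_s)[L_sg _]]] := rget_replies O c_rget.
case: (signed_tags O (L_sg y y_L)) => [->|[iw wt]]; [by left|right; exists iw].
by apply: write_tag_setcl wt => ? ? ?; rewrite c_rget.
Qed.

Lemma reachable_inv st : 3 * #|B| < #|S| - k -> 0 < k ->
  reachable B k delta enc dec v0 st -> exists g, Inv st g.
Proof.
move=> hB hk; elim=> [|{}st st' _ [g I] st_st']; first by exists (fun _ => set0); exact: inv_init.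
case: st_st' I => [{}st c v c_idle|{}st c c_idle|{}st n1 n2 c s m net_s s_correct|
  {}st n1 n2 s c m net_s|{}st s c m s_byz|{}st c rid v R c_wtag quorum t|
  {}st c rid t A c_wput quorum|{}st c rid R t c_rget quorum t_k t_max v|
  {}st c rid t v A c_rput quorum] I; have [N O H] := I.
- exists g; apply: (inv_invoke N O H c_idle); first by left; exists v.
  by move=> y /List.in_map_iff[s [<- _]]; exists s; left.
- exists g; apply: (inv_invoke N O H c_idle); first by right.
  by move=> y /List.in_map_iff[s [<- _]]; exists s; right.
- by exists g; apply: inv_deliver N O H net_s s_correct.
- exists g; apply: inv_recv N O H _ _ => [y|_]; rewrite net_s !List.in_app_iff /=; tauto.
- by exists g; apply: inv_recv N O H _ _ => [//|]; rewrite s_byz.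
- by exists g; apply: inv_write_start_put I c_wtag.
- by eexists; apply: (inv_respond (rid := rid) (t := t) (A := A) N O H); left.
- by exists g; apply: inv_read_start_put I hB hk c_rget quorum t_k t_max.
- by eexists; apply: (inv_respond (rid := rid) (t := t) (A := A) N O H); right; exists v.
Qed.

End Protocol.

Theorem mainTheorem7 (S : finType) (B : {set S}) (b k delta : nat)
    (V E : eqType) (enc : V -> 'I_#|S| -> E) (dec : seq E -> V) (v0 : V)
    (hk : 0 < k) (hkn : k <= #|S|)
    (hcode : forall (v : V) (J : seq 'I_#|S|), uniq J -> k <= size J ->
               dec [seq enc v j | j <- J] = v)
    (hdelta : 1 <= delta)
    (hB : #|B| <= b) (hb : 3 * b < #|S| - k)
    (st : State S V E) (hreach : reachable B k delta enc dec v0 st)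
    (hconc : write_concurrency_le delta (hist st))
    (iw jw ir jr cw cr : nat) (vw : V) (tw tr : Tag) (vr : V) :
  iw < jw -> jw < ir -> ir < jr -> jr < size (hist st) ->
  evt (hist st) iw = EInvW cw vw ->
  evt (hist st) jw = ERespW cw tw -> ~~ done_before (hist st) iw jw ->
  evt (hist st) ir = EInvR cr ->
  evt (hist st) jr = ERespR cr tr vr -> ~~ done_before (hist st) ir jr ->
  tle tw tr.
Proof.
(* Decoding only determines the value returned, not its tag. *)
move=> _ jw_ir ir_jr jr_h _ jw_resp _ ir_inv jr_resp nd.
have hB' : 3 * #|B| < #|S| - k by lia.
have [g [_ _ H]] := reachable_inv hB' hk hreach.
exact: (read_after_write H hconc ir_jr jr_h ir_inv jr_resp nd jw_ir jw_resp).
Qed.
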